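(* For every integer $k\ge 1$ and all FDSs $A,B$, if $A^k=B^k$ then $A=B$.
   Context: A finite dynamical system (FDS) is a function $A:S_A\to S_A$ on a finite set $S_A$, considered up to isomorphism of functional graphs (vertex set $S_A$, arcs $x\to A(x)$). The product $AB$ is the function on $S_A\times S_B$ given by $(a,b)\mapsto(A(a),B(b))$, and $A^k$ denotes the $k$-fold product $A\times\cdots\times A$ (not the iterate/composition). *)

From mathcomp Require Import all_boot.
Set Implicit Arguments. Unset Strict Implicit. Unset Printing Implicit Defensive.

(* A finite dynamical system (FDS) is a function f : T -> T on a finite type T. *)

Definition fds_iso (T U : finType) (f : T -> T) (g : U -> U) : Prop :=
  exists h : T -> U, bijective h /\ forall x, h (f x) = g (h x).

Definition fds_prod (T U : finType) (f : T -> T) (g : U -> U) : T * U -> T * U :=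
  fun p => (f p.1, g p.2).

(* k-fold product A^k (NOT the k-th iterate): acts componentwise on
   T^k = {ffun 'I_k -> T}. *)
Definition fds_pow {T : finType} (k : nat) (f : T -> T)
  : {ffun 'I_k -> T} -> {ffun 'I_k -> T} :=
  fun x => [ffun i => f (x i)].
Arguments fds_pow {T} k f x.

From mathcomp Require Import all_boot.
Set Implicit Arguments. Unset Strict Implicit. Unset Printing Implicit Defensive.

(* Lovász's counting argument.  Write hom(X, A) for the number of morphisms
   of FDSs from X to A.  Morphisms into A^k are k-tuples of morphisms into A,
   so hom(X, A^k) = hom(X, A)^k and A^k = B^k forces hom(X, A) = hom(X, B)
   for every X.  Grouping the morphisms out of X by their kernel, those with
   a given non-trivial kernel correspond to the injective morphisms out of a
   strictly smaller FDS (the image), so induction on |X| shows that X has as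
   many injective morphisms into A as into B.  Taking X = A and X = B yields
   injective morphisms A -> B and B -> A, so A and B are isomorphic by
   finiteness. *)

Definition homs (S T : finType) (F : S -> S) (f : T -> T) : {set {ffun S -> T}} :=
  [set h : {ffun S -> T} | [forall x, h (F x) == f (h x)]].

Definition injs (S T : finType) (F : S -> S) (f : T -> T) : {set {ffun S -> T}} :=
  [set h in homs F f | injectiveb h].

Definition fker (S T : finType) (h : S -> T) : {set S * S} :=
  [set p | h p.1 == h p.2].

Lemma homsP (S T : finType) (F : S -> S) (f : T -> T) (h : {ffun S -> T}) :
  reflect (forall x, h (F x) = f (h x)) (h \in homs F f).
Proof. by rewrite inE; apply: (iffP forallP) => hF x; apply/eqP. Qed.

Lemma injsP (S T : finType) (F : S -> S) (f : T -> T) (h : {ffun S -> T}) :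
  reflect ((forall x, h (F x) = f (h x)) /\ injective h) (h \in injs F f).
Proof. by rewrite inE; apply: (iffP andP) => -[/homsP hF /injectiveP hI]. Qed.

Lemma card_injs_self_gt0 (T : finType) (f : T -> T) : 0 < #|injs f f|.
Proof.
by apply/card_gt0P; exists [ffun x => x]; apply/injsP; split=> [x|x y]; rewrite !ffunE.
Qed.

Lemma fds_iso_sym (T U : finType) (f : T -> T) (g : U -> U) :
  fds_iso f g -> fds_iso g f.
Proof.
move=> [h [h_bij hC]]; have [h' hK h'K] := h_bij.
exists h'; split; first by exists h.
by move=> y; apply: (bij_inj h_bij); rewrite h'K hC h'K.
Qed.

Lemma fds_iso_of_injs (T U : finType) (f : T -> T) (g : U -> U)
    (h : {ffun T -> U}) (h' : {ffun U -> T}) :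
  h \in injs f g -> h' \in injs g f -> fds_iso f g.
Proof.
move=> /injsP [hC h_inj] /injsP [_ h'_inj].
by exists h; split=> //; apply: inj_card_bij => //; apply: leq_card h'_inj.
Qed.

Lemma leq_card_homs_iso (S T U : finType) (F : S -> S) (f : T -> T) (g : U -> U) :
  fds_iso f g -> #|homs F f| <= #|homs F g|.
Proof.
move=> [p [p_bij pC]].
pose comp_p (h : {ffun S -> T}) : {ffun S -> U} := [ffun x => p (h x)].
have comp_p_inj : injective comp_p.
  move=> h1 h2 /ffunP eq_h; apply/ffunP => x.
  by apply: (bij_inj p_bij); move: (eq_h x); rewrite !ffunE.
rewrite -(card_imset _ comp_p_inj); apply/subset_leq_card/subsetP.
move=> _ /imsetP [h /homsP hC ->]; apply/homsP => x.
by rewrite !ffunE hC pC.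
Qed.

Lemma card_homs_iso (S T U : finType) (F : S -> S) (f : T -> T) (g : U -> U) :
  fds_iso f g -> #|homs F f| = #|homs F g|.
Proof.
move=> iso_fg; apply/eqP; rewrite eqn_leq !leq_card_homs_iso //.
exact: fds_iso_sym.
Qed.

Lemma card_homs_pow (S T : finType) (F : S -> S) (k : nat) (f : T -> T) :
  #|homs F (fds_pow k f)| = #|homs F f| ^ k.
Proof.
pose split_h (h : {ffun S -> {ffun 'I_k -> T}}) : {ffun 'I_k -> {ffun S -> T}} :=
  [ffun i => [ffun x => h x i]].
have split_h_inj : injective split_h.
  move=> h1 h2 /ffunP eq_h; apply/ffunP => x; apply/ffunP => i.
  by move/ffunP/(_ x): (eq_h i); rewrite !ffunE.
rewrite -[X in _ = _ ^ X]card_ord -card_ffun_on -(card_imset _ split_h_inj).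
apply: eq_card => hs; apply/imsetP/ffun_onP.
  move=> [h /homsP hC ->] i; apply/homsP => x.
  by rewrite !ffunE hC ffunE.
move=> hsC; exists [ffun x => [ffun i => hs i x]].
  apply/homsP => x; apply/ffunP => i.
  by rewrite !ffunE; move/homsP: (hsC i) ->.
by apply/ffunP => i; apply/ffunP => x; rewrite !ffunE.
Qed.

Lemma card_homs_eq_of_pow (k : nat) (T U : finType) (f : T -> T) (g : U -> U) :
  0 < k -> fds_iso (fds_pow k f) (fds_pow k g) ->
  forall (S : finType) (F : S -> S), #|homs F f| = #|homs F g|.
Proof.
move=> k_gt0 iso_pow S F; apply/eqP.
by rewrite -(eqn_exp2r _ _ k_gt0) -!card_homs_pow (card_homs_iso _ iso_pow).
Qed.

Lemma card_sum_fibers (X Y : finType) (A : {set X}) (p : X -> Y) :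
  #|A| = \sum_(y : Y) #|[set x in A | p x == y]|.
Proof.
rewrite -sum1_card (partition_big p xpredT) //=.
by apply: eq_bigr => y _; rewrite -sum1_card; apply: eq_bigl => x; rewrite !inE.
Qed.

Lemma fker_eq_diag (S T : finType) (h : S -> T) :
  (fker h == [set p : S * S | p.1 == p.2]) = injectiveb h.
Proof.
apply/eqP/injectiveP => [ker_h x y hxy | h_inj].
  have : (x, y) \in fker h by rewrite inE hxy.
  by rewrite ker_h inE => /eqP.
by apply/setP => -[x y]; rewrite !inE /=; apply/eqP/eqP => [/h_inj|->].
Qed.

Section Image.

Variables (S T : finType) (F : S -> S) (f : T -> T) (h0 : {ffun S -> T}).
Hypothesis h0C : forall x, h0 (F x) = f (h0 x).

Lemma codom_stable y : y \in codom h0 -> f y \in codom h0.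
Proof. by move=> /codomP [x ->]; rewrite -h0C codom_f. Qed.

Definition img := {y : T | y \in codom h0}.
Definition img_map (q : img) : img := exist _ (f (val q)) (codom_stable (valP q)).
Definition img_proj (x : S) : img := exist _ (h0 x) (codom_f h0 x).

Lemma img_proj_surj (q : img) : exists x, q = img_proj x.
Proof.
case: q => y y_im; have [x y_eq] := codomP y_im.
by exists x; apply: val_inj.
Qed.

Lemma img_projC x : img_proj (F x) = img_map (img_proj x).
Proof. by apply: val_inj; rewrite /= h0C. Qed.

Lemma card_img_lt : ~~ injectiveb h0 -> #|{: img}| < #|S|.
Proof.
move=> h0_ninj; rewrite card_sig ltn_neqAle leq_image_card andbT.
by apply: contra h0_ninj => /image_injP h0_inj; apply/injectiveP => x y /h0_inj; apply.
Qed.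

(* A morphism with the same kernel as h0 is an injective morphism precomposed
   with img_proj. *)
Lemma card_homs_fker (U : finType) (g : U -> U) :
  #|[set h in homs F g | fker h == fker h0]| = #|injs img_map g|.
Proof.
pose comp_proj (phi : {ffun img -> U}) : {ffun S -> U} := [ffun x => phi (img_proj x)].
have comp_proj_inj : injective comp_proj.
  move=> p1 p2 /ffunP eq_p; apply/ffunP => q; have [x ->] := img_proj_surj q.
  by move: (eq_p x); rewrite !ffunE.
rewrite -(card_imset _ comp_proj_inj); apply: eq_card => h.
apply/idP/imsetP => [|[phi /injsP [phiC phi_inj] ->]].
  rewrite inE => /andP [/homsP hC /eqP ker_h].
  have eq_h x y : (h x == h y) = (h0 x == h0 y).
    by move/setP/(_ (x, y)): ker_h; rewrite !inE.
  pose rep (q : img) : S := iinv (valP q).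
  have h0_rep q : h0 (rep q) = val q by rewrite f_iinv.
  exists [ffun q => h (rep q)].
    apply/injsP; split=> [q | q1 q2]; rewrite !ffunE.
      by rewrite -hC; apply/eqP; rewrite eq_h h0C !h0_rep.
    by move/eqP; rewrite eq_h !h0_rep => /eqP /val_inj.
  by apply/ffunP => x; rewrite !ffunE; apply/eqP; rewrite eq_h h0_rep.
rewrite inE; apply/andP; split.
  by apply/homsP => x; rewrite !ffunE img_projC phiC.
by apply/eqP/setP => -[x y]; rewrite !inE /= !ffunE (inj_eq phi_inj).
Qed.

End Image.

Lemma card_homs_fker_eq (S T U V : finType) (F : S -> S) (f : T -> T) (g : U -> U)
    (v : V -> V) (h0 : {ffun S -> V}) :
  (forall (S' : finType) (F' : S' -> S'), #|S'| < #|S| -> #|injs F' f| = #|injs F' g|) ->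
  h0 \in homs F v -> ~~ injectiveb h0 ->
  #|[set h in homs F f | fker h == fker h0]| = #|[set h in homs F g | fker h == fker h0]|.
Proof.
move=> injs_eq /homsP h0C h0_ninj.
by rewrite !(card_homs_fker h0C); apply/injs_eq/card_img_lt.
Qed.

Lemma card_injs_eq (T U : finType) (f : T -> T) (g : U -> U) :
  (forall (S : finType) (F : S -> S), #|homs F f| = #|homs F g|) ->
  forall (S : finType) (F : S -> S), #|injs F f| = #|injs F g|.
Proof.
move=> homs_eq S; have [n] := ubnP #|S|; elim: n S => // n IHn S S_lt F.
have injs_lt (S' : finType) (F' : S' -> S') : #|S'| < #|S| -> #|injs F' f| = #|injs F' g|.
  by move=> S'_lt; apply: IHn; apply: leq_trans S'_lt _.
pose diag := [set p : S * S | p.1 == p.2].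
have injs_fker (V : finType) (v : V -> V) :
    #|[set h in homs F v | fker h == diag]| = #|injs F v|.
  by apply: eq_card => h; rewrite !inE fker_eq_diag.
have class_eq th : th != diag ->
    #|[set h in homs F f | fker h == th]| = #|[set h in homs F g | fker h == th]|.
  move=> th_ndiag.
  have class_eq_rep (V : finType) (v : V -> V) (h0 : {ffun S -> V}) :
      h0 \in [set h in homs F v | fker h == th] ->
      #|[set h in homs F f | fker h == th]| = #|[set h in homs F g | fker h == th]|.
    move=> /setIdP [h0C /eqP ker_h0]; rewrite -ker_h0.
    by apply: card_homs_fker_eq h0C _; rewrite // -fker_eq_diag ker_h0.
  case: (set_0Vmem [set h in homs F f | fker h == th]) => [f_empty | [h0]];
    last exact: class_eq_rep.
  case: (set_0Vmem [set h in homs F g | fker h == th]) => [g_empty | [h0]];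
    last exact: class_eq_rep.
  by rewrite f_empty g_empty !cards0.
have := homs_eq S F; rewrite (card_sum_fibers _ (fun h : {ffun S -> T} => fker h)).
rewrite (card_sum_fibers _ (fun h : {ffun S -> U} => fker h)).
rewrite (bigD1 diag) // [in RHS](bigD1 diag) // !injs_fker (eq_bigr _ class_eq).
by move/eqP; rewrite eqn_add2r => /eqP.
Qed.

Theorem mainTheorem3 (k : nat) (T U : finType) (f : T -> T) (g : U -> U) :
  (1 <= k)%N -> fds_iso (fds_pow k f) (fds_pow k g) -> fds_iso f g.
Proof.
move=> k_gt0 iso_pow.
have homs_eq := card_homs_eq_of_pow k_gt0 iso_pow.
have injs_eq := card_injs_eq homs_eq.
have injs_eq' := card_injs_eq (fun S F => esym (homs_eq S F)).
have /card_gt0P [h inj_h] : 0 < #|injs f g| by rewrite -injs_eq card_injs_self_gt0.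
have /card_gt0P [h' inj_h'] : 0 < #|injs g f| by rewrite -injs_eq' card_injs_self_gt0.
exact: fds_iso_of_injs inj_h inj_h'.
Qed.
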